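(* Let $(H,\circ,N,\star,\boxdot)$ be a right skew bracoid, and for $h\in H$ let $\beta(h):N\to N$ be the map $\eta^{\beta(h)}=\overline{\eta}\star(\eta\boxdot h)\star\overline{(e_N\boxdot h)}$. Then for every $h\in H$ and $\mu,\eta\in N$: (1) $(\mu\star\eta)^{\beta(h)}=\overline{\eta}\star(\mu^{\beta(h)})\star\eta\star(\eta^{\beta(h)})$; (2) $e_N^{\beta(h)}=\eta^{\beta(e_H)}=e_N$; (3) $\overline{\eta}^{\beta(h)}=\eta\star\overline{(\eta^{\beta(h)})}\star\overline{\eta}$.
   Context: For a group $(N,\star)$, $e_N$ denotes its identity and $\overline{\eta}$ the inverse of $\eta$; $e_H$ is the identity of $(H,\circ)$. A right skew bracoid is a 5-tuple $(H,\circ,N,\star,\boxdot)$ where $(H,\circ)$ and $(N,\star)$ are groups and $\boxdot$ is a transitive right action of $(H,\circ)$ on the set $N$ such that $(\eta\star\mu)\boxdot h=(\eta\boxdot h)\star\overline{(e_N\boxdot h)}\star(\mu\boxdot h)$ for all $h\in H$, $\eta,\mu\in N$. *)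

From HB Require Import structures.
From mathcomp Require Import all_boot monoid.
Set Implicit Arguments. Unset Strict Implicit. Unset Printing Implicit Defensive.
Local Open Scope group_scope.

(* A right skew bracoid (H, o, N, *, [.]) : H and N are groups (mathcomp
   [groupType], multiplication [*], identity [1], inverse [^-1]) and
   [act : N -> H -> N] (eta [.] h = act eta h) is a transitive right action
   of H on the set N satisfying the bracoid compatibility. *)
Definition is_right_action (H N : groupType) (act : N -> H -> N) : Prop :=
  (forall eta : N, act eta 1 = eta) /\
  (forall (eta : N) (h k : H), act (act eta h) k = act eta (h * k)).

Definition is_transitive (H N : groupType) (act : N -> H -> N) : Prop :=
  forall eta mu : N, exists h : H, act eta h = mu.

Definition right_skew_bracoid (H N : groupType) (act : N -> H -> N) : Prop :=
  [/\ is_right_action act, is_transitive act &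
      forall (h : H) (eta mu : N),
        act (eta * mu) h = act eta h * (act 1 h)^-1 * act mu h].

Definition beta (H N : groupType) (act : N -> H -> N) (h : H) (eta : N) : N :=
  eta^-1 * act eta h * (act 1 h)^-1.

From HB Require Import structures.
From mathcomp Require Import all_boot monoid.
Local Open Scope group_scope.

(* The compatibility axiom says precisely that the normalised action
   gamma_h(eta) = (eta [.] h) (e_N [.] h)^-1 is an endomorphism of N, and
   beta(h)(eta) = eta^-1 gamma_h(eta). Identities (1) and (3) are then the
   multiplicativity of gamma_h and its compatibility with inverses, and (2)
   follows from gamma_h(e_N) = e_N and gamma_{e_H} = id. *)

Section NormalisedAction.

Variables (H N : groupType) (act : N -> H -> N).

Definition normalised_act (h : H) (eta : N) : N := act eta h * (act 1 h)^-1.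

Lemma beta_normalised_act h eta :
  beta act h eta = eta^-1 * normalised_act h eta.
Proof. by rewrite /beta /normalised_act mulgA. Qed.

Lemma normalised_act1 h : normalised_act h 1 = 1.
Proof. exact: mulgV. Qed.

Lemma normalised_act_id :
  (forall eta : N, act eta 1 = eta) -> forall eta, normalised_act 1 eta = eta.
Proof. by move=> act1 eta; rewrite /normalised_act !act1 invg1 mulg1. Qed.

Hypothesis act_compat : forall (h : H) (eta mu : N),
  act (eta * mu) h = act eta h * (act 1 h)^-1 * act mu h.

Lemma normalised_actM h eta mu :
  normalised_act h (eta * mu) = normalised_act h eta * normalised_act h mu.
Proof. by rewrite /normalised_act act_compat !mulgA. Qed.

Lemma normalised_actV h eta :
  normalised_act h eta^-1 = (normalised_act h eta)^-1.
Proof.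
apply/esym/mulg1_eq.
by rewrite -normalised_actM mulgV normalised_act1.
Qed.

Lemma betaM h mu eta :
  beta act h (mu * eta) = eta^-1 * beta act h mu * eta * beta act h eta.
Proof.
by rewrite !beta_normalised_act normalised_actM invgM !mulgA mulgK.
Qed.

Lemma betaV h eta :
  beta act h eta^-1 = eta * (beta act h eta)^-1 * eta^-1.
Proof.
rewrite !beta_normalised_act normalised_actV invgK.
move: (normalised_act h eta) => g. (* otherwise invgM rewrites inside its body *)
by rewrite invgM invgK !mulgA mulgK.
Qed.

End NormalisedAction.

Theorem lemma2p8 (H N : groupType) (act : N -> H -> N) :
  right_skew_bracoid act ->
  forall (h : H) (mu eta : N),
    [/\ beta act h (mu * eta) = eta^-1 * beta act h mu * eta * beta act h eta,
        beta act h 1 = 1 /\ beta act 1 eta = 1 &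
        beta act h eta^-1 = eta * (beta act h eta)^-1 * eta^-1].
Proof.
move=> [[act1 _] _ act_compat] h mu eta.
split; [exact: betaM | split | exact: betaV].
- by rewrite beta_normalised_act normalised_act1 invg1 mulg1.
- by rewrite beta_normalised_act normalised_act_id ?mulVg.
Qed.
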